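(* Let $V$ be a finite nonempty set, $c\in\mathbb{R}^{P_V}$, $\hat x$ a maximally specific partial function on $P_V$, $U\subseteq V$, $\hat x'=\hat x|_{P_U}$, $c'=c|_{P_U}$, $ij\in P_U\setminus\operatorname{dom}(\hat x)$, $b\in\{0,1\}$, and $y\in\operatorname{argmax}\{\varphi_{c'}(x')\mid x'\in X_U[\hat x'],\ x'_{ij}=b\}$. Let $\tau\colon X_V[\hat x]\to X_V[\hat x]$ be a map such that $\tau(x)|_{P_{V\setminus U}}=x|_{P_{V\setminus U}}$ and $\tau(x)|_{P_U}=y$ for every $x\in X_V[\hat x]$. Let $\mathrm{lb},\mathrm{ub},\mathrm{ub}'\in\mathbb{R}$ satisfy $\mathrm{lb}\le\max\{\varphi_{c'}(x)\mid x\in X_U[\hat x'],\ x_{ij}=b\}$, $\mathrm{ub}\ge\max\{\varphi_{c'}(x)\mid x\in X_U[\hat x'],\ x_{ij}=1-b\}$, and $\mathrm{ub}'\ge\max\{\sum_{pq\in\delta(U)}c_{pq}(x_{pq}-\tau(x)_{pq})\mid x\in X_V[\hat x],\ x_{ij}=1-b\}$. If $\mathrm{lb}-\mathrm{ub}\ge\mathrm{ub}'$, then there is a maximizer $x^*$ of $\varphi_c$ over $X_V[\hat x]$ with $x^*_{ij}=b$.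
   Context: For a finite set $W$, $P_W=\{pq\in W^2\mid p\neq q\}$ and $X_W$ is the set of $x\in\{0,1\}^{P_W}$ with $x_{pq}+x_{qr}-x_{pr}\le 1$ for all pairwise distinct $p,q,r\in W$; $\varphi_c(x)=\sum_{pq\in P_W}c_{pq}x_{pq}$ for $c\in\mathbb{R}^{P_W}$. A partial function $\tilde x$ on $P_W$ is a map from $\operatorname{dom}(\tilde x)\subseteq P_W$ to $\{0,1\}$, and $X_W[\tilde x]=\{x\in X_W\mid x_{pq}=\tilde x_{pq}\ \forall pq\in\operatorname{dom}(\tilde x)\}$. A pair $pq$ is decided if $x_{pq}=x'_{pq}$ for all $x,x'\in X_W[\tilde x]$; $\tilde x$ is maximally specific if $X_W[\tilde x]\ne\emptyset$ and the decided pairs are exactly $\operatorname{dom}(\tilde x)$. $\hat x|_{P_U}$ is the partial function on $P_U$ with domain $\operatorname{dom}(\hat x)\cap P_U$ agreeing with $\hat x$; $c|_{P_U}$ and $x|_{P_U}$ are restrictions. $\delta(U)=(U\times(V\setminus U))\cup((V\setminus U)\times U)$. *)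

From mathcomp Require Import all_boot all_order all_algebra.
Set Implicit Arguments. Unset Strict Implicit. Unset Printing Implicit Defensive.
Import Order.TTheory GRing.Theory Num.Theory.
Local Open Scope ring_scope.

Section Defs.
Variable V : finType.

Definition inPW (W : {set V}) (pq : V * V) : bool :=
  [&& pq.1 \in W, pq.2 \in W & pq.1 != pq.2].
Definition PW (W : {set V}) := {pq : V * V | inPW W pq}.

Definition at_pair T (d : T) (W : {set V}) (f : {ffun PW W -> T}) (p q : V) : T :=
  if @insub _ (inPW W) (PW W) (p, q) is Some pq then f pq else d.

(* restriction f|_{P_U} of f : P_W -> T (meaningful for U \subset W) *)
Definition restr T (d : T) (W U : {set V}) (f : {ffun PW W -> T}) : {ffun PW U -> T} :=
  [ffun pq : PW U => at_pair d f (val pq).1 (val pq).2].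

Definition inX (W : {set V}) (x : {ffun PW W -> bool}) : Prop :=
  forall p q r, p \in W -> q \in W -> r \in W ->
    p != q -> q != r -> p != r ->
    ((at_pair false x p q)%:R + (at_pair false x q r)%:R
       - (at_pair false x p r)%:R <= 1 :> int).

(* X_W[xt] for a partial function xt : P_W -> option bool (dom = Some) *)
Definition inXp (W : {set V}) (xt : {ffun PW W -> option bool})
  (x : {ffun PW W -> bool}) : Prop :=
  inX x /\ forall pq, forall b, xt pq = Some b -> x pq = b.

Definition decided (W : {set V}) (xt : {ffun PW W -> option bool}) (pq : PW W) : Prop :=
  forall x x', inXp xt x -> inXp xt x' -> x pq = x' pq.

Definition max_specific (W : {set V}) (xt : {ffun PW W -> option bool}) : Prop :=
  (exists x, inXp xt x) /\ forall pq, decided xt pq <-> xt pq != None.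

Definition phi (R : realFieldType) (W : {set V}) (c : {ffun PW W -> R})
  (x : {ffun PW W -> bool}) : R :=
  \sum_(pq : PW W) c pq * (x pq)%:R.

End Defs.

From mathcomp Require Import all_boot all_order all_algebra.
From Stdlib Require Import ClassicalEpsilon.
From mathcomp Require Import lra.
Set Implicit Arguments. Unset Strict Implicit. Unset Printing Implicit Defensive.
Import Order.TTheory GRing.Theory Num.Theory.
Local Open Scope ring_scope.

(* Take a maximizer xs of phi c over X_V[xh].  If xs_ij <> b, the point tau(xs)
   agrees with xs outside U, equals y inside U and crosses the cut delta(U)
   differently, so phi c xs - phi c tau(xs) splits into
   (phi c' xs|_U - phi c' y) + (cut term) <= (ub - lb) + ub' <= 0;
   hence tau(xs) is a maximizer with tau(xs)_ij = y_ij = b. *)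

Lemma ex_maximizer (T : finType) d (R : orderType d) (P : T -> Prop) (f : T -> R) :
  (exists x, P x) -> exists2 m, P m & forall x, P x -> (f x <= f m)%O.
Proof.
move=> [x0 Px0].
pose Pb x := if excluded_middle_informative (P x) then true else false.
have PbP x : reflect (P x) (Pb x).
  by rewrite /Pb; case: excluded_middle_informative => h; constructor.
have [m /PbP Pm maxm] := arg_maxP f (introT (PbP x0) Px0).
by exists m => // x /PbP /maxm.
Qed.

Section Pairs.
Variable V : finType.
Implicit Types W U : {set V}.

Lemma big_PW (R : nmodType) W (P : pred (V * V)) (F : V * V -> R) :
  \sum_(pq : PW W | P (val pq)) F (val pq) = \sum_(pq | inPW W pq && P pq) F pq.
Proof.
symmetry; rewrite (reindex_omap (val : PW W -> V * V) insub); last first.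
  by move=> pq /andP[pqW _]; rewrite insubT.
by apply: eq_bigl => -[pq pqW] /=; rewrite insubT ?pqW /= eqxx andbT.
Qed.

Lemma at_pair_val T (d : T) W (f : {ffun PW W -> T}) (pq : PW W) :
  at_pair d f (val pq).1 (val pq).2 = f pq.
Proof. by rewrite /at_pair -surjective_pairing valK. Qed.

Lemma at_pair_restr T (d : T) W U (f : {ffun PW W -> T}) p q :
  inPW U (p, q) -> at_pair d (restr d U f) p q = at_pair d f p q.
Proof. by move=> pqU; rewrite /at_pair insubT /restr ffunE. Qed.

Lemma at_pair_restr_val T (d : T) W U (f : {ffun PW W -> T}) (pq : PW W) :
  inPW U (val pq) -> at_pair d (restr d U f) (val pq).1 (val pq).2 = f pq.
Proof. by move=> pqU; rewrite at_pair_restr ?at_pair_val // -surjective_pairing. Qed.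

Lemma eq_restr_val T (d : T) W U (f g : {ffun PW W -> T}) (pq : PW W) :
  restr d U f = restr d U g -> inPW U (val pq) -> f pq = g pq.
Proof.
by move=> fgU pqU; rewrite -(at_pair_restr_val d f pqU) -(at_pair_restr_val d g pqU) fgU.
Qed.

Lemma inXp_restr W U (xt : {ffun PW W -> option bool}) x :
  U \subset W -> inXp xt x -> inXp (restr None U xt) (restr false U x).
Proof.
move=> /subsetP UW [xX xxt]; split.
  move=> p q r pU qU rU npq nqr npr.
  rewrite !at_pair_restr ?/inPW /= ?pU ?qU ?rU //.
  exact: xX (UW _ pU) (UW _ qU) (UW _ rU) npq nqr npr.
move=> pq b; rewrite !ffunE /at_pair.
by case: insubP => [pq' _ _ /xxt|].
Qed.

Section Objective.
Variable R : realFieldType.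

Lemma phiB W (c : {ffun PW W -> R}) x x' :
  phi c x - phi c x' = \sum_pq c pq * ((x pq)%:R - (x' pq)%:R).
Proof. by rewrite /phi -sumrB; apply: eq_bigr => pq _; rewrite mulrBr. Qed.

Lemma phi_restr W U (c : {ffun PW W -> R}) x : U \subset W ->
  phi (restr 0 U c) (restr false U x) =
  \sum_(pq : PW W | ((val pq).1 \in U) && ((val pq).2 \in U)) c pq * (x pq)%:R.
Proof.
move=> /subsetP UW.
pose G pq := at_pair 0 c pq.1 pq.2 * (at_pair false x pq.1 pq.2)%:R.
rewrite /phi (eq_bigr (G \o val)); last by move=> pq _; rewrite !ffunE.
rewrite [RHS](eq_bigr (G \o val)); last by move=> pq _; rewrite /G /= !at_pair_val.
rewrite (big_PW _ xpredT) (big_PW _ (fun pq => (pq.1 \in U) && (pq.2 \in U))).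
apply: eq_bigl => -[p q]; rewrite /inPW /= andbT.
case pU: (p \in U); last by rewrite !andbF.
case qU: (q \in U); last by rewrite !andbF.
by rewrite UW ?UW ?andbT.
Qed.

Lemma phiB_split (U : {set V}) (c : {ffun PW [set: V] -> R}) x x' :
  restr false (~: U) x = restr false (~: U) x' ->
  phi c x - phi c x' =
    (phi (restr 0 U c) (restr false U x) - phi (restr 0 U c) (restr false U x'))
    + \sum_(pq : PW [set: V] | ((val pq).1 \in U) != ((val pq).2 \in U))
        c pq * ((x pq)%:R - (x' pq)%:R).
Proof.
move=> eq_out; set cut := fun pq : PW [set: V] => ((val pq).1 \in U) != ((val pq).2 \in U).
rewrite phiB (bigID cut) [LHS]addrC /=.
rewrite [X in X + _ = _](bigID (fun pq => (val pq).1 \in U)) /=.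
rewrite [X in _ + X + _ = _]big1 ?addr0; last first.
  move=> pq /andP[]; rewrite negbK => /eqP same pU'.
  rewrite (eq_restr_val eq_out) ?subrr ?mulr0 //.
  case/andP: (valP pq) => _ /andP[_ npq].
  by rewrite /inPW !inE -same pU' npq.
rewrite !phi_restr ?subsetT // -sumrB; congr (_ + _).
apply: eq_big => [pq | pq _]; last by rewrite mulrBr.
by rewrite /cut; case: ((val pq).1 \in U); case: ((val pq).2 \in U).
Qed.

End Objective.
End Pairs.

Theorem proposition6p7 (R : realFieldType) (V : finType) (hV : (0 < #|V|)%N)
  (c : {ffun PW [set: V] -> R})
  (xh : {ffun PW [set: V] -> option bool})
  (hxh : max_specific xh)
  (U : {set V})
  (ij : PW [set: V]) (hiU : (val ij).1 \in U) (hjU : (val ij).2 \in U)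
  (hij : xh ij = None)
  (b : bool)
  (y : {ffun PW U -> bool})
  (hy : inXp (restr None U xh) y /\ at_pair false y (val ij).1 (val ij).2 = b /\
        forall x', inXp (restr None U xh) x' -> at_pair false x' (val ij).1 (val ij).2 = b ->
          phi (restr 0 U c) x' <= phi (restr 0 U c) y)
  (tau : {ffun PW [set: V] -> bool} -> {ffun PW [set: V] -> bool})
  (htau : forall x, inXp xh x ->
     [/\ inXp xh (tau x),
         restr false (~: U) (tau x) = restr false (~: U) x &
         restr false U (tau x) = y])
  (lb ub ub' : R)
  (hlb : exists x, [/\ inXp (restr None U xh) x,
                      at_pair false x (val ij).1 (val ij).2 = b &
                      lb <= phi (restr 0 U c) x])
  (hub : forall x, inXp (restr None U xh) x ->
           at_pair false x (val ij).1 (val ij).2 = ~~ b ->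
           phi (restr 0 U c) x <= ub)
  (hub' : forall x, inXp xh x -> x ij = ~~ b ->
           \sum_(pq : PW [set: V] | ((val pq).1 \in U) != ((val pq).2 \in U))
              c pq * ((x pq)%:R - (tau x pq)%:R) <= ub')
  (hgap : lb - ub >= ub') :
  exists xs, [/\ inXp xh xs,
                 (forall x, inXp xh x -> phi c x <= phi c xs) &
                 xs ij = b].
Proof.
have [xs xsX xs_max] := ex_maximizer (phi c) hxh.1.
have ijU : inPW U (val ij).
  by case/andP: (valP ij) => _ /andP[_ nij]; rewrite /inPW hiU hjU.
have [xs_ij | xs_ij] := eqVneq (xs ij) b; first by exists xs.
have {}xs_ij : xs ij = ~~ b by move: xs_ij; case: (xs ij); case: (b).
have [tX t_out t_in] := htau xs xsX.
have t_ij : tau xs ij = b by rewrite -(at_pair_restr_val false _ ijU) t_in; exact: hy.2.1.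
suff : phi c xs - phi c (tau xs) <= 0.
  by rewrite subr_le0 => le_xs; exists (tau xs); split=> // x /xs_max /le_trans; apply.
rewrite (phiB_split c (esym t_out)) t_in.
have in_ub := hub _ (inXp_restr (subsetT U) xsX) (etrans (at_pair_restr_val false _ ijU) xs_ij).
have cut_ub' := hub' _ xsX xs_ij.
have [x1 [x1X x1_ij lb_x1]] := hlb.
have y_x1 := hy.2.2 _ x1X x1_ij.
lra.
Qed.
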